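(* Let $\mathcal A$ be a finite set and $\pi^{\mathrm{ref}}\in\Delta(\mathcal A)$ with $\min_{a\in\mathcal A}\pi^{\mathrm{ref}}(a)=\alpha>0$. Then the map $\pi\mapsto\mathrm{KL}(\pi^{\mathrm{ref}}\|\pi)$, viewed as a map from the relative interior $\mathrm{ri}(\Delta(\mathcal A))$ to $\mathbb R_+$, is $\Theta(\alpha)$-strongly convex with respect to the $L^1$ distance.
   Context: $\mathrm{KL}(P\|Q)=\sum_aP(a)\log(P(a)/Q(a))$. $\mathrm{ri}(\Delta(\mathcal A))$ is the set of probability vectors with all entries strictly positive. $\Theta(\alpha)$ means the strong convexity modulus is a constant multiple of $\alpha$ (absolute constant). *)

From mathcomp Require Import all_boot all_order all_algebra.
From mathcomp Require Import all_classical all_reals exp.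
Set Implicit Arguments. Unset Strict Implicit. Unset Printing Implicit Defensive.
Import Order.TTheory GRing.Theory Num.Theory.
Local Open Scope ring_scope.

Section Defs.
Variables (R : realType) (A : finType).

Definition in_simplex (p : A -> R) : Prop :=
  (forall a, 0 <= p a) /\ \sum_(a : A) p a = 1.

Definition in_ri_simplex (p : A -> R) : Prop :=
  (forall a, 0 < p a) /\ \sum_(a : A) p a = 1.

Definition KL (P Q : A -> R) : R :=
  \sum_(a : A) P a * ln (P a / Q a).

Definition L1dist (p q : A -> R) : R := \sum_(a : A) `|p a - q a|.

Definition strongly_convex_L1 (D : (A -> R) -> Prop) (f : (A -> R) -> R)
    (mu : R) : Prop :=
  forall (x y : A -> R) (t : R), D x -> D y -> 0 <= t <= 1 ->
    f (fun a => t * x a + (1 - t) * y a)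
    <= t * f x + (1 - t) * f y - mu / 2 * t * (1 - t) * (L1dist x y) ^+ 2.

End Defs.

(** The convex combination [m = t x + (1 - t) y] satisfies
    [t KL(p || x) + (1 - t) KL(p || y) = KL(p || m) + sum_a p(a) J(a)], where
    [J(a)] is the Jensen gap of [ln] at [x(a), y(a)].  Applying [ln u >= 1 - 1/u]
    to [sqrt(m/x)] and [sqrt(m/y)] bounds [J(a)] below by
    [t (1 - t) (sqrt x(a) - sqrt y(a))^2 / m(a)], and [m(a) <= 1].  Hence the
    excess is at least [alpha t (1 - t)] times the squared Hellinger sum, which
    by Cauchy-Schwarz dominates a quarter of the squared [L^1] distance. *)
From mathcomp Require Import all_boot all_order all_algebra.
From mathcomp Require Import all_classical all_reals exp.
From mathcomp Require Import lra ring.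
Set Implicit Arguments. Unset Strict Implicit. Unset Printing Implicit Defensive.
Import Order.TTheory GRing.Theory Num.Theory.
Local Open Scope ring_scope.

Lemma sum_mul_sqr_le (R : realDomainType) (I : finType) (u v : I -> R) :
  (\sum_i u i * v i) ^+ 2 <= (\sum_i u i ^+ 2) * (\sum_i v i ^+ 2).
Proof.
have swapped : (\sum_i u i ^+ 2) * (\sum_i v i ^+ 2) =
    \sum_i \sum_j u j ^+ 2 * v i ^+ 2.
  rewrite mulrC big_distrlr /=.
  by apply: eq_bigr => i _; apply: eq_bigr => j _; rewrite mulrC.
(* Sum [2 u_i v_i u_j v_j <= u_i^2 v_j^2 + u_j^2 v_i^2] over all pairs. *)
rewrite -(ler_pM2l (ltr0Sn _ 1)) mulr2n !mulrDl !mul1r.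
rewrite {1}swapped {1}big_distrlr -big_split /=.
rewrite expr2 big_distrlr -!big_split /=; apply: ler_sum => i _.
rewrite -!big_split /=; apply: ler_sum => j _.
have := sqr_ge0 (u i * v j - u j * v i); nra.
Qed.

Section LnGap.
Variable R : realType.

Definition ln_gap (t x y : R) : R :=
  ln (t * x + (1 - t) * y) - (t * ln x + (1 - t) * ln y).

Lemma le1BV_ln (x : R) : 0 < x -> 1 - x^-1 <= ln x.
Proof.
move=> x0; have xV0 : 0 < x^-1 by rewrite invr_gt0.
have := @le_ln1Dx R (x^-1 - 1) ltac:(lra).
by rewrite addrC subrK lnV ?posrE //; lra.
Qed.

Lemma ln_gap_ge (t x y : R) : 0 < x -> 0 < y -> 0 <= t <= 1 ->
  t * (1 - t) * (Num.sqrt x - Num.sqrt y) ^+ 2 / (t * x + (1 - t) * y)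
  <= ln_gap t x y.
Proof.
move=> x0 y0 /andP[t0 t1].
have m0 : 0 < t * x + (1 - t) * y by nra.
set m := t * x + (1 - t) * y in m0 *.
set a := Num.sqrt x; set b := Num.sqrt y; set r := Num.sqrt m.
have a0 : 0 < a by rewrite sqrtr_gt0.
have b0 : 0 < b by rewrite sqrtr_gt0.
have r0 : 0 < r by rewrite sqrtr_gt0.
have ea : x = a ^+ 2 by rewrite sqr_sqrtr // ltW.
have eb : y = b ^+ 2 by rewrite sqr_sqrtr // ltW.
have er : m = r ^+ 2 by rewrite sqr_sqrtr // ltW.
have gap_sqrt : ln_gap t x y = 2 * (t * ln (r / a) + (1 - t) * ln (r / b)).
  by rewrite /ln_gap -/m er ea eb !lnXn // !ln_div ?posrE //; ring.
have ln_ra : 1 - a / r <= ln (r / a) by rewrite -invf_div le1BV_ln ?divr_gt0.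
have ln_rb : 1 - b / r <= ln (r / b) by rewrite -invf_div le1BV_ln ?divr_gt0.
set w := (t * a + (1 - t) * b) / r.
have gap_ge : 2 * (1 - w) <= ln_gap t x y.
  rewrite gap_sqrt ler_pM2l // /w.
  have -> : 1 - (t * a + (1 - t) * b) / r =
            t * (1 - a / r) + (1 - t) * (1 - b / r).
    by field; rewrite gt_eqF.
  by apply: lerD; apply: ler_wpM2l; lra.
have -> : t * (1 - t) * (a - b) ^+ 2 / m = 1 - w ^+ 2.
  have -> : t * (1 - t) * (a - b) ^+ 2 = r ^+ 2 - (t * a + (1 - t) * b) ^+ 2.
    by rewrite -er /m ea eb; ring.
  by rewrite er /w; field; rewrite gt_eqF.
by apply: le_trans gap_ge; have := sqr_ge0 (1 - w); lra.
Qed.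
End LnGap.

Section Simplex.
Variables (R : realType) (A : finType).
Implicit Types (p q x y : A -> R) (t : R).

Lemma in_ri_simplexW p : in_ri_simplex p -> in_simplex p.
Proof. by case=> p_gt0 p1; split=> // a; exact: ltW. Qed.

Lemma in_simplex_le1 p a : in_simplex p -> p a <= 1.
Proof.
case=> p_ge0 <-; rewrite (bigD1 a) //= lerDl.
by apply: sumr_ge0 => i _.
Qed.

Lemma L1dist_sqr_le_hellinger p q : in_simplex p -> in_simplex q ->
  L1dist p q ^+ 2 <= 4 * \sum_a (Num.sqrt (p a) - Num.sqrt (q a)) ^+ 2.
Proof.
move=> [p_ge0 p1] [q_ge0 q1].
have sqr_sqrt a : Num.sqrt (p a) ^+ 2 = p a /\ Num.sqrt (q a) ^+ 2 = q a.
  by rewrite !sqr_sqrtr.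
have L1E : L1dist p q = \sum_a `|Num.sqrt (p a) - Num.sqrt (q a)|
                               * (Num.sqrt (p a) + Num.sqrt (q a)).
  apply: eq_bigr => a _.
  rewrite -[X in _ = _ * X]ger0_norm ?addr_ge0 ?sqrtr_ge0 // -normrM -subr_sqr.
  by have [-> ->] := sqr_sqrt a.
have sum_sqr_add : \sum_a (Num.sqrt (p a) + Num.sqrt (q a)) ^+ 2 <= 4.
  have -> : 4 = \sum_a 2 * (p a + q a) :> R.
    by rewrite -mulr_sumr big_split /= p1 q1; lra.
  apply: ler_sum => a _; have := sqr_ge0 (Num.sqrt (p a) - Num.sqrt (q a)).
  by rewrite sqrrB sqrrD; have [-> ->] := sqr_sqrt a; lra.
rewrite L1E; apply: le_trans (sum_mul_sqr_le
  (fun a => `|Num.sqrt (p a) - Num.sqrt (q a)|)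
  (fun a => Num.sqrt (p a) + Num.sqrt (q a))) _.
under eq_bigr do rewrite real_normK ?num_real //.
rewrite mulrC; apply: ler_wpM2r sum_sqr_add.
by apply: sumr_ge0 => a _; exact: sqr_ge0.
Qed.

Lemma KL_convex_combination p x y t :
  (forall a, 0 <= p a) -> (forall a, 0 < x a) -> (forall a, 0 < y a) ->
  0 <= t <= 1 ->
  t * KL p x + (1 - t) * KL p y =
  KL p (fun a => t * x a + (1 - t) * y a) + \sum_a p a * ln_gap t (x a) (y a).
Proof.
move=> p_ge0 x_gt0 y_gt0 /andP[t0 t1].
rewrite /KL !mulr_sumr -!big_split; apply: eq_bigr => a _ /=.
have [->|pa_neq0] := eqVneq (p a) 0; first by rewrite !mul0r !mulr0 addr0.
have pa_gt0 : 0 < p a by rewrite lt_def pa_neq0 p_ge0.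
have m_gt0 : 0 < t * x a + (1 - t) * y a by have := x_gt0 a; have := y_gt0 a; nra.
by rewrite /ln_gap !ln_div ?posrE //; ring.
Qed.

Lemma sum_ln_gap_ge (alpha : R) p x y t :
  0 <= alpha -> (forall a, alpha <= p a) ->
  in_ri_simplex x -> in_ri_simplex y -> 0 <= t <= 1 ->
  alpha * (t * (1 - t)) / 4 * L1dist x y ^+ 2
  <= \sum_a p a * ln_gap t (x a) (y a).
Proof.
move=> alpha0 alpha_le x_ri y_ri t01; have /andP[t0 t1] := t01.
have tt0 : 0 <= t * (1 - t) by nra.
set H := \sum_a (Num.sqrt (x a) - Num.sqrt (y a)) ^+ 2.
apply: (@le_trans _ _ (alpha * (t * (1 - t)) * H)).
  rewrite mulrAC -mulrA; apply: ler_wpM2l; first exact: mulr_ge0.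
  rewrite ler_pdivrMr //.
  have := L1dist_sqr_le_hellinger (in_ri_simplexW x_ri) (in_ri_simplexW y_ri).
  by rewrite -/H; lra.
rewrite mulr_sumr; apply: ler_sum => a _; rewrite -mulrA.
apply: ler_pM => //; first by rewrite mulr_ge0 ?sqr_ge0.
have [x_gt0 _] := x_ri; have [y_gt0 _] := y_ri.
have m_gt0 : 0 < t * x a + (1 - t) * y a by have := x_gt0 a; have := y_gt0 a; nra.
have m_le1 : t * x a + (1 - t) * y a <= 1.
  have := in_simplex_le1 a (in_ri_simplexW x_ri).
  have := in_simplex_le1 a (in_ri_simplexW y_ri); nra.
apply: le_trans (ln_gap_ge (x_gt0 a) (y_gt0 a) t01).
by rewrite ler_pdivlMr //; apply: ler_piMr => //; rewrite mulr_ge0 ?sqr_ge0.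
Qed.

End Simplex.

Theorem lemma5p1 (R : realType) :
  exists c : R, 0 < c /\
  forall (A : finType) (pref : A -> R) (alpha : R),
    in_simplex pref ->
    (forall a, alpha <= pref a) -> (exists a, pref a = alpha) ->
    0 < alpha ->
    strongly_convex_L1 (@in_ri_simplex R A) (fun pi => KL pref pi) (c * alpha).
Proof.
exists (1 / 2); split; first lra.
move=> A p alpha [p_ge0 _] alpha_le _ alpha_gt0 x y t x_ri y_ri t01.
have [[x_gt0 _] [y_gt0 _]] := (x_ri, y_ri).
rewrite KL_convex_combination //.
have := sum_ln_gap_ge (ltW alpha_gt0) alpha_le x_ri y_ri t01.
lra.
Qed.
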